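(* Let $L^\bullet_{\mathrm{cl}}$ be a classical generalized operator algebra with the extended Fredholm property. Let $N\in\mathbb N$ and $A_j\in L^0_{\mathrm{cl}}((g^j,g^{j+1}))$, $j=0,\dots,N$, be such that for each $\ell=1,\dots,n$ the sequence $0\to E_\ell(g^0)\xrightarrow{\sigma_\ell(A_0)}E_\ell(g^1)\to\cdots\xrightarrow{\sigma_\ell(A_N)}E_\ell(g^{N+1})\to0$ is an exact family of complexes. Then there exist $\tilde A_j\in L^0_{\mathrm{cl}}((g^j,g^{j+1}))$ with $\sigma(\tilde A_j)=\sigma(A_j)$ such that $0\to H(g^0)\xrightarrow{\tilde A_0}H(g^1)\to\cdots\xrightarrow{\tilde A_N}H(g^{N+1})\to0$ is a complex. If $A_{j+1}A_j$ is smoothing for every $j$, the $\tilde A_j$ can be chosen with $\tilde A_j-A_j$ smoothing for every $j$.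
   Context: Generalized operator algebra $L^\bullet$: a set $G$ of weights; to each $g\in G$ a Hilbert space $H(g)$; for each pair $(g^0,g^1)$ vector spaces $L^{-\infty}\subset L^0\subset\mathcal L(H(g^0),H(g^1))$ with compact smoothing operators, identities in $L^0((g,g))$, closed under composition (orders adding in $\{0,-\infty\}$) and Hilbert adjoints. Classical: there is a principal symbol map $A\mapsto\sigma(A)=(\sigma_1(A),\dots,\sigma_n(A))$, $\sigma_\ell(A):E_\ell(g^0)\to E_\ell(g^1)$ Hilbert bundle morphisms (for fixed $\ell$ all bundles over a common base), linear, multiplicative, $\sigma_\ell(A^* )=\sigma_\ell(A)^*$, zero on smoothing operators, and $A$ elliptic (all $\sigma_\ell(A)$ invertible) iff $A$ has a parametrix (inverse modulo smoothing operators). Extended Fredholm property: every $A\in L^0$ has a parametrix iff it is Fredholm, and every selfadjoint Fredholm $A\in L^0((g,g))$ has a parametrix $B$ with $AB=BA=1-\pi$, $\pi$ the orthogonal projection onto $\ker A$. A family of complexes is exact if it is exact in each fibre. *)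

From Stdlib Require Import Reals Arith.
Set Implicit Arguments.

Record Cplx := mkC { re : R; im : R }.
Definition C0 : Cplx := mkC 0%R 0%R.
Definition C1 : Cplx := mkC 1%R 0%R.
Definition Cadd (a b : Cplx) : Cplx := mkC (re a + re b)%R (im a + im b)%R.
Definition Cmul (a b : Cplx) : Cplx :=
  mkC (re a * re b - im a * im b)%R (re a * im b + im a * re b)%R.
Definition Cconj (a : Cplx) : Cplx := mkC (re a) (- im a)%R.

Record Hilbert := {
  hV :> Type;
  hzero : hV;
  hadd : hV -> hV -> hV;
  hopp : hV -> hV;
  hscal : Cplx -> hV -> hV;
  hinner : hV -> hV -> Cplx;  (* linear in the first argument *)
  hadd_assoc : forall x y z, hadd x (hadd y z) = hadd (hadd x y) z;
  hadd_comm : forall x y, hadd x y = hadd y x;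
  hadd_0 : forall x, hadd hzero x = x;
  hadd_opp : forall x, hadd (hopp x) x = hzero;
  hscal_1 : forall x, hscal C1 x = x;
  hscal_mul : forall a b x, hscal a (hscal b x) = hscal (Cmul a b) x;
  hscal_addv : forall a x y, hscal a (hadd x y) = hadd (hscal a x) (hscal a y);
  hscal_adds : forall a b x, hscal (Cadd a b) x = hadd (hscal a x) (hscal b x);
  hinner_add : forall x y z, hinner (hadd x y) z = Cadd (hinner x z) (hinner y z);
  hinner_scal : forall a x z, hinner (hscal a x) z = Cmul a (hinner x z);
  hinner_conj : forall x y, hinner x y = Cconj (hinner y x);
  hinner_pos : forall x, (0 <= re (hinner x x))%R;
  hinner_def : forall x, hinner x x = C0 -> x = hzero;
  hcomplete : forall u : nat -> hV,
    (forall eps, (0 < eps)%R -> exists N, forall m k, (N <= m)%nat -> (N <= k)%nat ->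
        (sqrt (re (hinner (hadd (u m) (hopp (u k))) (hadd (u m) (hopp (u k))))) < eps)%R) ->
    exists l, forall eps, (0 < eps)%R -> exists N, forall m, (N <= m)%nat ->
        (sqrt (re (hinner (hadd (u m) (hopp l)) (hadd (u m) (hopp l)))) < eps)%R
}.

Arguments hzero {h}.
Arguments hadd {h}.
Arguments hopp {h}.
Arguments hscal {h}.
Arguments hinner {h}.

Definition hnorm {V : Hilbert} (x : V) : R := sqrt (re (hinner x x)).
Definition hdist {V : Hilbert} (x y : V) : R := hnorm (hadd x (hopp y)).

Definition converges {V : Hilbert} (u : nat -> V) (l : V) : Prop :=
  forall eps, (0 < eps)%R -> exists N, forall m, (N <= m)%nat -> (hdist (u m) l < eps)%R.

Definition linear_op {V W : Hilbert} (f : V -> W) : Prop :=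
  (forall x y, f (hadd x y) = hadd (f x) (f y)) /\
  (forall a x, f (hscal a x) = hscal a (f x)).

Definition bounded_op {V W : Hilbert} (f : V -> W) : Prop :=
  linear_op f /\ exists M, forall x, (hnorm (f x) <= M * hnorm x)%R.

Definition compact_op {V W : Hilbert} (f : V -> W) : Prop :=
  bounded_op f /\
  forall u : nat -> V, (exists M, forall k, (hnorm (u k) <= M)%R) ->
    exists phi : nat -> nat, (forall k, (phi k < phi (S k))%nat) /\
      exists l, converges (fun k => f (u (phi k))) l.

Fixpoint lincomb {V : Hilbert} (cl : list (Cplx * V)) : V :=
  match cl with
  | nil => hzero
  | cons (a, v) t => hadd (hscal a v) (lincomb t)
  end.

Definition in_span {V : Hilbert} (l : list V) (x : V) : Prop :=
  exists cl : list (Cplx * V), (forall p, List.In p cl -> List.In (snd p) l) /\ x = lincomb cl.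

Definition fredholm {V W : Hilbert} (f : V -> W) : Prop :=
  bounded_op f /\
  (exists l : list V, forall x, f x = hzero -> in_span l x) /\
  (* closed range *)
  (forall (u : nat -> V) (y : W), converges (fun k => f (u k)) y -> exists x, f x = y) /\
  (* finite-dimensional cokernel *)
  (exists l : list W, forall y, exists x z, in_span l z /\ y = hadd (f x) z).

Definition is_adjoint {V W : Hilbert} (f : V -> W) (g : W -> V) : Prop :=
  forall x y, hinner (f x) y = hinner x (g y).

Definition selfadjoint {V : Hilbert} (f : V -> V) : Prop := is_adjoint f f.

Definition orth_proj_ker {V W : Hilbert} (f : V -> W) (P : V -> V) : Prop :=
  forall x, f (P x) = hzero /\
    forall y, f y = hzero -> hinner (hadd x (hopp (P x))) y = C0.

Definition opzero {V W : Hilbert} : V -> W := fun _ => hzero.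
Definition opadd {V W : Hilbert} (f g : V -> W) : V -> W := fun x => hadd (f x) (g x).
Definition opsub {V W : Hilbert} (f g : V -> W) : V -> W := fun x => hadd (f x) (hopp (g x)).
Definition opscal {V W : Hilbert} (a : Cplx) (f : V -> W) : V -> W := fun x => hscal a (f x).
Definition opcomp {U V W : Hilbert} (g : V -> W) (f : U -> V) : U -> W := fun x => g (f x).
Definition opid {V : Hilbert} : V -> V := fun x => x.

Unset Implicit Arguments.
Record GOA := {
  G : Type;
  H : G -> Hilbert;
  L0 : forall g0 g1 : G, (H g0 -> H g1) -> Prop;
  Linf : forall g0 g1 : G, (H g0 -> H g1) -> Prop;
  L0_bounded : forall g0 g1 A, L0 g0 g1 A -> bounded_op A;
  Linf_L0 : forall g0 g1 A, Linf g0 g1 A -> L0 g0 g1 A;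
  Linf_compact : forall g0 g1 A, Linf g0 g1 A -> compact_op A;
  L0_zero : forall g0 g1, L0 g0 g1 opzero;
  L0_add : forall g0 g1 A B, L0 g0 g1 A -> L0 g0 g1 B -> L0 g0 g1 (opadd A B);
  L0_scal : forall g0 g1 a A, L0 g0 g1 A -> L0 g0 g1 (opscal a A);
  Linf_zero : forall g0 g1, Linf g0 g1 opzero;
  Linf_add : forall g0 g1 A B, Linf g0 g1 A -> Linf g0 g1 B -> Linf g0 g1 (opadd A B);
  Linf_scal : forall g0 g1 a A, Linf g0 g1 A -> Linf g0 g1 (opscal a A);
  L0_id : forall g, L0 g g opid;
  L0_comp : forall g0 g1 g2 A B, L0 g0 g1 A -> L0 g1 g2 B -> L0 g0 g2 (opcomp B A);
  Linf_comp_l : forall g0 g1 g2 A B, Linf g0 g1 A -> L0 g1 g2 B -> Linf g0 g2 (opcomp B A);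
  Linf_comp_r : forall g0 g1 g2 A B, L0 g0 g1 A -> Linf g1 g2 B -> Linf g0 g2 (opcomp B A);
  L0_adj : forall g0 g1 A, L0 g0 g1 A -> exists B, is_adjoint A B /\ L0 g1 g0 B;
  Linf_adj : forall g0 g1 A, Linf g0 g1 A -> exists B, is_adjoint A B /\ Linf g1 g0 B
}.

Arguments L0 {g3} g0 g1 : rename.
Arguments Linf {g3} g0 g1 : rename.

Definition has_parametrix (L : GOA) (g0 g1 : G L) (A : H L g0 -> H L g1) : Prop :=
  exists B : H L g1 -> H L g0, L0 g1 g0 B /\
    Linf g0 g0 (opsub (opcomp B A) opid) /\ Linf g1 g1 (opsub (opcomp A B) opid).

(* Hilbert bundles are modelled as families of Hilbert spaces over a base
   X l, and bundle morphisms as families of fibrewise bounded operators. *)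
Record Classical (L : GOA) := {
  nsym : nat;
  Xbase : nat -> Type;
  Ebun : forall (l : nat) (g : G L), Xbase l -> Hilbert;
  symb : forall (l : nat) (g0 g1 : G L), (H L g0 -> H L g1) ->
            forall x : Xbase l, Ebun l g0 x -> Ebun l g1 x;
  sym_morph : forall l g0 g1 A, (l < nsym)%nat -> L0 g0 g1 A ->
      forall x, bounded_op (symb l g0 g1 A x);
  sym_add : forall l g0 g1 A B, (l < nsym)%nat -> L0 g0 g1 A -> L0 g0 g1 B ->
      symb l g0 g1 (opadd A B) = fun x => opadd (symb l g0 g1 A x) (symb l g0 g1 B x);
  sym_scal : forall l g0 g1 a A, (l < nsym)%nat -> L0 g0 g1 A ->
      symb l g0 g1 (opscal a A) = fun x => opscal a (symb l g0 g1 A x);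
  sym_mul : forall l g0 g1 g2 A B, (l < nsym)%nat -> L0 g0 g1 A -> L0 g1 g2 B ->
      symb l g0 g2 (opcomp B A) = fun x => opcomp (symb l g1 g2 B x) (symb l g0 g1 A x);
  sym_adj : forall l g0 g1 A B, (l < nsym)%nat -> L0 g0 g1 A -> is_adjoint A B ->
      forall x, is_adjoint (symb l g0 g1 A x) (symb l g1 g0 B x);
  sym_smooth : forall l g0 g1 A, (l < nsym)%nat -> Linf g0 g1 A ->
      symb l g0 g1 A = fun x => opzero;
  sym_elliptic : forall g0 g1 A, L0 g0 g1 A ->
      ((forall l, (l < nsym)%nat -> forall x,
          exists Bx, (forall v, Bx (symb l g0 g1 A x v) = v) /\
                     (forall w, symb l g0 g1 A x (Bx w) = w))
       <-> has_parametrix L g0 g1 A)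
}.

Arguments nsym {L}.
Arguments Xbase {L}.
Arguments Ebun {L}.
Arguments symb {L} c l {g0 g1}.

Definition ext_fredholm (L : GOA) : Prop :=
  (forall g0 g1 (A : H L g0 -> H L g1), L0 g0 g1 A ->
      (has_parametrix L g0 g1 A <-> fredholm A)) /\
  (forall g (A : H L g -> H L g), L0 g g A -> selfadjoint A -> fredholm A ->
      exists B P, L0 g g B /\ orth_proj_ker A P /\
        opcomp A B = opsub opid P /\ opcomp B A = opsub opid P).

(* exactness of 0 -> V 0 -> V 1 -> ... -> V (N+1) -> 0 with maps f 0, ..., f N *)
Definition exact_seq (V : nat -> Hilbert) (f : forall j, V j -> V (S j)) (N : nat) : Prop :=
  (forall u v, f 0%nat u = f 0%nat v -> u = v) /\
  (forall j, (j < N)%nat -> forall v, f (S j) v = hzero <-> exists u, f j u = v) /\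
  (forall w, exists v, f N v = w).

(* Put At_0 = A_0 and At_(j+1) = A_(j+1) - A_(j+1) At_j C_j, where C_j in L^0 is a
   generalized inverse of At_j (At_j C_j At_j = At_j).  Then At_(j+1) At_j = 0; the symbol
   is unchanged because sigma(A_(j+1)) sigma(A_j) = 0; and At_(j+1) - A_(j+1) =
   - A_(j+1) At_j C_j is smoothing whenever A_(j+1) A_j is.
   A generalized inverse of T = At_j exists: with R = At_(j-1), the Laplacian
   D = T* T + R R* is elliptic, since on each fibre the exact symbol complex has closed
   ranges (open mapping theorem), which makes sigma(D) coercive and hence invertible.
   The extended Fredholm property gives B with B D = 1 - pi_(ker D), and C = B T* works. *)

From Pilot Require Import Defs.
From Stdlib Require Import Reals Arith Lra Lia Psatz Classical ClassicalEpsilon FunctionalExtensionality.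
Open Scope R_scope.

Arguments hadd_assoc {h}. Arguments hadd_comm {h}. Arguments hadd_0 {h}.
Arguments hadd_opp {h}. Arguments hscal_1 {h}. Arguments hscal_mul {h}.
Arguments hscal_addv {h}. Arguments hscal_adds {h}. Arguments hinner_add {h}.
Arguments hinner_scal {h}. Arguments hinner_conj {h}. Arguments hinner_pos {h}.
Arguments hinner_def {h}.

Lemma Cplx_eq (a b : Cplx) : re a = re b -> im a = im b -> a = b.
Proof. destruct a, b; simpl; intros; subst; reflexivity. Qed.

Definition RtoC (t : R) : Cplx := mkC t 0.

Section HilbertAlgebra.
Context {V : Hilbert}.
Implicit Types x y z a b c d : V.

Lemma hadd_0_r x : hadd x hzero = x.
Proof. rewrite hadd_comm; apply hadd_0. Qed.

Lemma hadd_opp_r x : hadd x (hopp x) = hzero.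
Proof. rewrite hadd_comm; apply hadd_opp. Qed.

Lemma hadd_cancel_l a b c : hadd a b = hadd a c -> b = c.
Proof.
  intro E. rewrite <- (hadd_0 b), <- (hadd_0 c), <- (hadd_opp a), <- !hadd_assoc, E.
  reflexivity.
Qed.

Lemma hopp_unique a b : hadd a b = hzero -> b = hopp a.
Proof. intro E. apply (hadd_cancel_l a). rewrite E, hadd_opp_r. reflexivity. Qed.

Lemma hopp_involutive a : hopp (hopp a) = a.
Proof. symmetry. apply hopp_unique, hadd_opp. Qed.

Lemma hopp_0 : hopp (@hzero V) = hzero.
Proof. symmetry. apply hopp_unique, hadd_0. Qed.

Lemma hadd_shuffle a b c d : hadd (hadd a b) (hadd c d) = hadd (hadd a c) (hadd b d).
Proof. rewrite <- !hadd_assoc. f_equal. rewrite !hadd_assoc. f_equal. apply hadd_comm. Qed.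

Lemma hopp_hadd a b : hopp (hadd a b) = hadd (hopp a) (hopp b).
Proof.
  symmetry. apply hopp_unique. rewrite hadd_shuffle, !hadd_opp_r. apply hadd_0.
Qed.

Lemma hsub_eq0 a b : hadd a (hopp b) = hzero -> a = b.
Proof. intro E. rewrite <- (hadd_0_r a), <- (hadd_opp b), hadd_assoc, E, hadd_0. reflexivity. Qed.

Lemma hsub_add_cancel a b : hadd (hadd a (hopp b)) b = a.
Proof. rewrite <- hadd_assoc, hadd_opp, hadd_0_r. reflexivity. Qed.

Lemma hadd_sub_cancel a b : hadd b (hadd a (hopp b)) = a.
Proof. rewrite hadd_comm. apply hsub_add_cancel. Qed.

Lemma hadd_sub_cancel_l a b : hadd (hadd a b) (hopp a) = b.
Proof. rewrite (hadd_comm a b), <- hadd_assoc, hadd_opp_r, hadd_0_r. reflexivity. Qed.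

Lemma hadd_sub_cancel_r a b : hadd (hadd a b) (hopp b) = a.
Proof. rewrite <- hadd_assoc, hadd_opp_r, hadd_0_r. reflexivity. Qed.

Lemma hsub_hadd a b c d :
  hadd (hadd a b) (hopp (hadd c d)) = hadd (hadd a (hopp c)) (hadd b (hopp d)).
Proof. rewrite hopp_hadd, hadd_shuffle. reflexivity. Qed.

Lemma hsub_hsub a b c d :
  hadd (hadd a (hopp b)) (hopp (hadd c (hopp d))) = hadd (hadd a (hopp c)) (hopp (hadd b (hopp d))).
Proof. rewrite !hopp_hadd, !hopp_involutive, hadd_shuffle. reflexivity. Qed.

Lemma hscal_C0 x : hscal Defs.C0 x = hzero.
Proof.
  apply (hadd_cancel_l (hscal Defs.C0 x)). rewrite <- hscal_adds, hadd_0_r.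
  f_equal. apply Cplx_eq; simpl; lra.
Qed.

Lemma hopp_hscal x : hopp x = hscal (RtoC (-1)) x.
Proof.
  symmetry. apply hopp_unique. rewrite <- (hscal_1 x) at 1. rewrite <- hscal_adds.
  replace (Cadd Defs.C1 (RtoC (-1))) with Defs.C0 by (apply Cplx_eq; simpl; lra). apply hscal_C0.
Qed.

Lemma hopp_hscal_comm s x : hopp (hscal s x) = hscal s (hopp x).
Proof. rewrite !hopp_hscal, !hscal_mul. f_equal. apply Cplx_eq; simpl; ring. Qed.

Lemma hscal_hsub s x y : hscal s (hadd x (hopp y)) = hadd (hscal s x) (hopp (hscal s y)).
Proof. rewrite hscal_addv, hopp_hscal_comm. reflexivity. Qed.

Lemma hscal_inv t x : t <> 0 -> hscal (RtoC (/ t)) (hscal (RtoC t) x) = x.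
Proof.
  intro Ht. rewrite hscal_mul. replace (Cmul (RtoC (/ t)) (RtoC t)) with Defs.C1 by
    (apply Cplx_eq; simpl; field; auto).
  apply hscal_1.
Qed.

Lemma hinner_0_l z : hinner hzero z = Defs.C0.
Proof.
  assert (E := hinner_add hzero hzero z). rewrite hadd_0 in E.
  destruct (hinner hzero z) as [p q]. unfold Cadd in E; simpl in E. injection E; intros.
  apply Cplx_eq; simpl; lra.
Qed.

Lemma hinner_0_r z : hinner z hzero = Defs.C0.
Proof. rewrite hinner_conj, hinner_0_l. apply Cplx_eq; simpl; lra. Qed.

Lemma hinner_add_r x y z : hinner z (hadd x y) = Cadd (hinner z x) (hinner z y).
Proof.
  rewrite hinner_conj, hinner_add, (hinner_conj x z), (hinner_conj y z).
  apply Cplx_eq; simpl; lra.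
Qed.

Lemma re_hinner_sym x y : re (hinner x y) = re (hinner y x).
Proof. rewrite hinner_conj. reflexivity. Qed.

Lemma re_hinner_add_l x y z : re (hinner (hadd x y) z) = re (hinner x z) + re (hinner y z).
Proof. rewrite hinner_add. reflexivity. Qed.

Lemma re_hinner_add_r x y z : re (hinner z (hadd x y)) = re (hinner z x) + re (hinner z y).
Proof. rewrite hinner_add_r. reflexivity. Qed.

Lemma re_hinner_scal_l t x y : re (hinner (hscal (RtoC t) x) y) = t * re (hinner x y).
Proof. rewrite hinner_scal. simpl. lra. Qed.

Lemma re_hinner_scal_r t x y : re (hinner x (hscal (RtoC t) y)) = t * re (hinner x y).
Proof. rewrite re_hinner_sym, re_hinner_scal_l, re_hinner_sym. reflexivity. Qed.

Lemma im_hinner_self x : im (hinner x x) = 0.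
Proof.
  assert (E := hinner_conj x x). destruct (hinner x x) as [p q].
  unfold Cconj in E; simpl in E. injection E; intros; simpl; lra.
Qed.

End HilbertAlgebra.

Lemma Rle_of_sqr_le (a b : R) : 0 <= b -> a * a <= b * b -> a <= b.
Proof. intros Hb Hab. destruct (Rle_dec a b) as [|Hlt]; [assumption | nra]. Qed.

Section Norm.
Context {V : Hilbert}.
Implicit Types x y z : V.

Definition hnorm2 x : R := re (hinner x x).

Lemma hnorm2_ge0 x : 0 <= hnorm2 x.
Proof. apply hinner_pos. Qed.

Lemma hnorm2_eq0 x : hnorm2 x = 0 -> x = hzero.
Proof. intro E. apply hinner_def. apply Cplx_eq; [exact E | apply im_hinner_self]. Qed.

Lemma hnorm_sqr x : hnorm x * hnorm x = hnorm2 x.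
Proof. apply sqrt_sqrt, hnorm2_ge0. Qed.

Lemma hnorm_ge0 x : 0 <= hnorm x.
Proof. apply sqrt_pos. Qed.

Lemma hnorm_eq0 x : hnorm x = 0 -> x = hzero.
Proof. intro E. apply hnorm2_eq0. rewrite <- hnorm_sqr, E. ring. Qed.

Lemma hnorm_0 : hnorm (@hzero V) = 0.
Proof. unfold hnorm. rewrite hinner_0_l. apply sqrt_0. Qed.

Lemma hnorm2_add x y : hnorm2 (hadd x y) = hnorm2 x + 2 * re (hinner x y) + hnorm2 y.
Proof.
  unfold hnorm2. rewrite re_hinner_add_l, !re_hinner_add_r, (re_hinner_sym y x). ring.
Qed.

Lemma hnorm2_scal t x : hnorm2 (hscal (RtoC t) x) = t * t * hnorm2 x.
Proof. unfold hnorm2. rewrite re_hinner_scal_l, re_hinner_scal_r. ring. Qed.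

Lemma hnorm_le_sqr x b : 0 <= b -> hnorm2 x <= b * b -> hnorm x <= b.
Proof. intros Hb E. rewrite <- hnorm_sqr in E. apply Rle_of_sqr_le; assumption. Qed.

Lemma Cauchy_Schwarz x y : re (hinner x y) <= hnorm x * hnorm y.
Proof.
  destruct (Req_dec (hnorm2 y) 0) as [Hy|Hy].
  { rewrite (hnorm2_eq0 _ Hy), hinner_0_r. simpl.
    apply Rmult_le_pos; apply hnorm_ge0. }
  assert (Hp : 0 < hnorm2 y) by (pose proof (hnorm2_ge0 y); lra).
  set (c := re (hinner x y)).
  (* expand 0 <= |x - (c / |y|^2) y|^2 *)
  assert (H0 := hnorm2_ge0 (hadd x (hscal (RtoC (- c / hnorm2 y)) y))).
  rewrite hnorm2_add, hnorm2_scal, re_hinner_scal_r in H0. fold c in H0.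
  assert (Hc : c * c <= hnorm2 x * hnorm2 y).
  { replace (hnorm2 x + 2 * (- c / hnorm2 y * c) + - c / hnorm2 y * (- c / hnorm2 y) * hnorm2 y)
      with ((hnorm2 x * hnorm2 y - c * c) / hnorm2 y) in H0 by (field; lra).
    apply Rmult_le_compat_r with (r := hnorm2 y) in H0; [|lra].
    unfold Rdiv in H0. rewrite Rmult_assoc, Rinv_l, Rmult_1_r, Rmult_0_l in H0; lra. }
  rewrite <- !hnorm_sqr in Hc. apply Rle_of_sqr_le; [|nra].
  apply Rmult_le_pos; apply hnorm_ge0.
Qed.

Lemma hnorm_triangle x y : hnorm (hadd x y) <= hnorm x + hnorm y.
Proof.
  apply hnorm_le_sqr. pose proof (hnorm_ge0 x); pose proof (hnorm_ge0 y); lra.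
  rewrite hnorm2_add, <- !hnorm_sqr. pose proof (Cauchy_Schwarz x y). nra.
Qed.

Lemma hnorm_scal t x : hnorm (hscal (RtoC t) x) = Rabs t * hnorm x.
Proof.
  unfold hnorm at 1. fold (hnorm2 (hscal (RtoC t) x)). rewrite hnorm2_scal, <- hnorm_sqr.
  replace (t * t * (hnorm x * hnorm x)) with (Rsqr (Rabs t * hnorm x)).
  2: { unfold Rsqr. replace (t * t) with (Rabs t * Rabs t); [ring|].
       rewrite <- Rabs_mult. apply Rabs_right, Rle_ge. nra. }
  apply sqrt_Rsqr. apply Rmult_le_pos; [apply Rabs_pos | apply hnorm_ge0].
Qed.

Lemma hnorm_opp x : hnorm (hopp x) = hnorm x.
Proof. rewrite hopp_hscal, hnorm_scal, Rabs_left by lra. ring. Qed.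

Lemma hnorm_sub_le x y : hnorm (hadd x (hopp y)) <= hnorm x + hnorm y.
Proof. rewrite <- (hnorm_opp y). apply hnorm_triangle. Qed.

Lemma hdist_triangle x y z : hdist x z <= hdist x y + hdist y z.
Proof.
  unfold hdist. eapply Rle_trans; [|apply hnorm_triangle]. right. f_equal.
  rewrite <- hadd_assoc, (hadd_assoc (hopp y)), hadd_opp, hadd_0. reflexivity.
Qed.

Lemma hdist_sym x y : hdist x y = hdist y x.
Proof.
  unfold hdist. rewrite <- hnorm_opp, hopp_hadd, hopp_involutive, hadd_comm. reflexivity.
Qed.

Lemma hdist_ge0 x y : 0 <= hdist x y.
Proof. apply hnorm_ge0. Qed.

Lemma hdist_eq0 x y : hdist x y = 0 -> x = y.
Proof. intro E. apply hsub_eq0, hnorm_eq0, E. Qed.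

Lemma hdist_refl x : hdist x x = 0.
Proof. unfold hdist. rewrite hadd_opp_r. apply hnorm_0. Qed.

Lemma hdist_0_r x : hdist x hzero = hnorm x.
Proof. unfold hdist. rewrite hopp_0, hadd_0_r. reflexivity. Qed.

Lemma hdist_scal t x y : hdist (hscal (RtoC t) x) (hscal (RtoC t) y) = Rabs t * hdist x y.
Proof. unfold hdist. rewrite <- hscal_hsub, hnorm_scal. reflexivity. Qed.

Lemma hdist_hsub_le x y z w :
  hdist (hadd x (hopp y)) (hadd z (hopp w)) <= hdist x z + hdist y w.
Proof. unfold hdist at 1. rewrite hsub_hsub. apply hnorm_sub_le. Qed.

End Norm.

Section Sequences.
Context {V : Hilbert}.
Implicit Types (u : nat -> V) (l c : V).

Lemma converges_unique u l1 l2 : converges u l1 -> converges u l2 -> l1 = l2.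
Proof.
  intros H1 H2. apply hdist_eq0. destruct (Req_dec (hdist l1 l2) 0) as [E|E]; auto.
  exfalso. pose proof (hdist_ge0 l1 l2). set (e := hdist l1 l2 / 2).
  destruct (H1 e) as [N1 HN1]; [unfold e; lra|]. destruct (H2 e) as [N2 HN2]; [unfold e; lra|].
  specialize (HN1 (N1 + N2)%nat ltac:(lia)). specialize (HN2 (N1 + N2)%nat ltac:(lia)).
  pose proof (hdist_triangle l1 (u (N1 + N2)%nat) l2). rewrite hdist_sym in HN1.
  unfold e in *. lra.
Qed.

Lemma converges_ball u l c rho N : converges u l ->
  (forall m, (N <= m)%nat -> hdist (u m) c <= rho) -> hdist l c <= rho.
Proof.
  intros Hc Hb. apply Rnot_lt_le. intro Hlt.
  destruct (Hc (hdist l c - rho)) as [N1 HN1]; [lra|].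
  specialize (HN1 (N + N1)%nat ltac:(lia)). specialize (Hb (N + N1)%nat ltac:(lia)).
  pose proof (hdist_triangle l (u (N + N1)%nat) c). rewrite hdist_sym in HN1. lra.
Qed.

Lemma converges_S u l : converges u l -> converges (fun k => u (S k)) l.
Proof.
  intros Hc e He. destruct (Hc e He) as [N HN]. exists N. intros m Hm. apply HN. lia.
Qed.

Lemma hdist_geometric_partial u D q : 0 <= q < 1 ->
  (forall k, hdist (u (S k)) (u k) <= D * q ^ k) ->
  forall k p, hdist (u (k + p)%nat) (u k) <= D * q ^ k * (1 - q ^ p) / (1 - q).
Proof.
  intros Hq Hs k p. induction p as [|p IH].
  - rewrite Nat.add_0_r, hdist_refl. simpl. right. field. lra.
  - eapply Rle_trans; [apply (hdist_triangle _ (u (k + p)%nat))|].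
    replace (k + S p)%nat with (S (k + p)) by lia.
    eapply Rle_trans; [apply Rplus_le_compat; [apply Hs | apply IH]|].
    rewrite pow_add. simpl. right. field. lra.
Qed.

(* The only appeal to the completeness of V. *)
Lemma geometric_converges u D q : 0 <= D -> 0 <= q < 1 ->
  (forall k, hdist (u (S k)) (u k) <= D * q ^ k) -> exists l, converges u l.
Proof.
  intros HD Hq Hs. apply (hcomplete V u). intros eps He.
  assert (Hb : forall k p, hdist (u (k + p)%nat) (u k) <= D * q ^ k / (1 - q)).
  { intros k p. eapply Rle_trans; [apply (hdist_geometric_partial u D q Hq Hs)|].
    unfold Rdiv. apply Rmult_le_compat_r; [left; apply Rinv_0_lt_compat; lra|].
    pose proof (pow_le q p ltac:(lra)). pose proof (pow_le q k ltac:(lra)).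
    assert (q ^ p <= 1) by (rewrite <- (pow1 p); apply pow_incr; lra).
    assert (0 <= D * q ^ k) by (apply Rmult_le_pos; lra). nra. }
  destruct (pow_lt_1_zero q ltac:(rewrite Rabs_right; lra) (eps * (1 - q) / (2 * (D + 1))))
    as [N HN]; [apply Rdiv_lt_0_compat; nra|].
  exists N. intros m k Hm Hk.
  specialize (HN N (le_n _)). rewrite Rabs_right in HN by (apply Rle_ge, pow_le; lra).
  assert (E : forall j, (N <= j)%nat -> hdist (u j) (u N) <= D * q ^ N / (1 - q)).
  { intros j Hj. replace j with (N + (j - N))%nat by lia. apply Hb. }
  assert (Small : D * q ^ N / (1 - q) < eps / 2).
  { apply Rmult_lt_reg_r with (r := 1 - q); [lra|].
    unfold Rdiv. rewrite Rmult_assoc, Rinv_l, Rmult_1_r by lra.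
    pose proof (pow_le q N ltac:(lra)).
    apply Rle_lt_trans with ((D + 1) * q ^ N); [nra|].
    apply Rmult_lt_compat_l with (r := D + 1) in HN; [|lra].
    replace ((D + 1) * (eps * (1 - q) / (2 * (D + 1)))) with (eps / 2 * (1 - q)) in HN
      by (field; lra). lra. }
  pose proof (E m Hm). pose proof (E k Hk). pose proof (hdist_triangle (u m) (u N) (u k)).
  rewrite (hdist_sym (u N) (u k)) in *. change (hdist (u m) (u k) < eps). lra.
Qed.

Lemma converges_geometric_0 u C q : 0 <= q < 1 ->
  (forall k, hnorm (u k) <= C * q ^ k) -> converges u hzero.
Proof.
  intros Hq Hu eps He.
  destruct (pow_lt_1_zero q ltac:(rewrite Rabs_right; lra) (eps / (Rabs C + 1))) as [N HN].
  { apply Rdiv_lt_0_compat; [lra | pose proof (Rabs_pos C); lra]. }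
  exists N. intros m Hm. rewrite hdist_0_r. specialize (HN m Hm). specialize (Hu m).
  rewrite Rabs_right in HN by (apply Rle_ge, pow_le; lra).
  pose proof (pow_le q m ltac:(lra)). pose proof (Rle_abs C). pose proof (Rabs_pos C).
  apply Rmult_lt_compat_l with (r := Rabs C + 1) in HN; [|lra].
  replace ((Rabs C + 1) * (eps / (Rabs C + 1))) with eps in HN by (field; lra). nra.
Qed.

Lemma contraction_fixpoint (Phi : V -> V) q : 0 <= q < 1 ->
  (forall x y, hdist (Phi x) (Phi y) <= q * hdist x y) -> exists l, Phi l = l.
Proof.
  intros Hq Hlip.
  pose (v := nat_rect (fun _ => V) hzero (fun _ x => Phi x)).
  assert (Sv : forall k, v (S k) = Phi (v k)) by reflexivity. clearbody v.
  destruct (geometric_converges v (hdist (v 1%nat) (v 0%nat)) q (hdist_ge0 _ _) Hq)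
    as [l Hl].
  { intro k. induction k as [|k IH]; [simpl; lra|].
    rewrite (Sv (S k)), (Sv k). eapply Rle_trans; [apply Hlip|].
    rewrite <- (Sv k). simpl. pose proof (hdist_ge0 (v (S k)) (v k)). nra. }
  exists l. apply (converges_unique (fun k => Phi (v k))).
  - intros e He. destruct (Hl e He) as [N HN]. exists N. intros m Hm.
    eapply Rle_lt_trans; [apply Hlip|]. specialize (HN m Hm).
    pose proof (hdist_ge0 (v m) l). nra.
  - intros e He. destruct (converges_S v l Hl e He) as [N HN]. exists N.
    intros m Hm. rewrite <- Sv. apply HN, Hm.
Qed.

End Sequences.

Section Operators.
Context {V W : Hilbert}.
Implicit Types (f : V -> W).

Lemma linear_op_0 f : linear_op f -> f hzero = hzero.
Proof.
  intros [Ha _]. apply (hadd_cancel_l (f hzero)). rewrite <- Ha, !hadd_0_r. reflexivity.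
Qed.

Lemma linear_op_opp f x : linear_op f -> f (hopp x) = hopp (f x).
Proof.
  intros Hf. apply hopp_unique. rewrite <- (proj1 Hf), hadd_opp_r. apply linear_op_0, Hf.
Qed.

Lemma linear_op_sub f x y : linear_op f -> f (hadd x (hopp y)) = hadd (f x) (hopp (f y)).
Proof. intros Hf. rewrite (proj1 Hf), linear_op_opp; auto. Qed.

Lemma bounded_op_pos f : bounded_op f ->
  exists M, 0 < M /\ forall x, hnorm (f x) <= M * hnorm x.
Proof.
  intros [_ [M HM]]. exists (Rmax M 1). split; [pose proof (Rmax_r M 1); lra|].
  intro x. eapply Rle_trans; [apply HM|].
  apply Rmult_le_compat_r; [apply hnorm_ge0 | apply Rmax_l].
Qed.

Lemma bounded_op_continuous f u l : bounded_op f -> converges u l ->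
  converges (fun k => f (u k)) (f l).
Proof.
  intros Hb Hc eps He. destruct (bounded_op_pos f Hb) as [M [HM HMb]].
  destruct (Hc (eps / M)) as [N HN]; [apply Rdiv_lt_0_compat; lra|].
  exists N. intros m Hm. unfold hdist. rewrite <- linear_op_sub by apply Hb.
  eapply Rle_lt_trans; [apply HMb|]. specialize (HN m Hm).
  apply Rmult_lt_compat_l with (r := M) in HN; auto.
  replace (M * (eps / M)) with eps in HN by (field; lra). exact HN.
Qed.

Lemma bounded_op_opadd f g : bounded_op f -> bounded_op g -> bounded_op (opadd f g).
Proof.
  intros Hf Hg. destruct (bounded_op_pos f Hf) as [M1 [P1 H1]].
  destruct (bounded_op_pos g Hg) as [M2 [P2 H2]]. split; [split|].
  - intros x y. unfold opadd. rewrite (proj1 (proj1 Hf)), (proj1 (proj1 Hg)).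
    apply hadd_shuffle.
  - intros s x. unfold opadd. rewrite (proj2 (proj1 Hf)), (proj2 (proj1 Hg)).
    symmetry. apply hscal_addv.
  - exists (M1 + M2). intro x. unfold opadd. eapply Rle_trans; [apply hnorm_triangle|].
    pose proof (H1 x). pose proof (H2 x). lra.
Qed.

Definition closed_range f : Prop :=
  forall (u : nat -> V) y, converges (fun k => f (u k)) y -> exists x, f x = y.

End Operators.

Lemma bounded_op_opcomp {U V W : Hilbert} (g : V -> W) (f : U -> V) :
  bounded_op g -> bounded_op f -> bounded_op (opcomp g f).
Proof.
  intros Hg Hf. destruct (bounded_op_pos g Hg) as [M1 [P1 H1]].
  destruct (bounded_op_pos f Hf) as [M2 [P2 H2]]. split; [split|].
  - intros x y. unfold opcomp. rewrite (proj1 (proj1 Hf)). apply (proj1 (proj1 Hg)).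
  - intros s x. unfold opcomp. rewrite (proj2 (proj1 Hf)). apply (proj2 (proj1 Hg)).
  - exists (M1 * M2). intro x. unfold opcomp. eapply Rle_trans; [apply H1|].
    rewrite Rmult_assoc. apply Rmult_le_compat_l; [lra | apply H2].
Qed.

Definition exact_at {U V W : Hilbert} (f : U -> V) (g : V -> W) : Prop :=
  forall v, g v = hzero <-> exists u, f u = v.

Lemma closed_range_of_exact {U V W : Hilbert} (f : U -> V) (g : V -> W) :
  bounded_op g -> exact_at f g -> closed_range f.
Proof.
  intros Hg Hex u y Hc. apply Hex.
  apply (converges_unique (fun k => g (f (u k)))).
  - apply bounded_op_continuous; assumption.
  - intros e He. exists 0%nat. intros m _.
    rewrite (proj2 (Hex _) (ex_intro _ (u m) eq_refl)), hdist_refl. exact He.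
Qed.

Section OpenMapping.
Context {X Y : Hilbert}.
Variable T : X -> Y.

(* The limit y of the T x_k lies in range T, say y = T x; for k > |x| the point y is both
   within r_(k+1) of T x_(k+1) and at distance >= 2 r_(k+1) from it. *)
Lemma nested_image_balls_absurd (s : nat -> X) (r : nat -> R) : closed_range T ->
  (forall k, 0 < r k /\ r k <= (/2) ^ k) ->
  (forall k, hdist (T (s (S k))) (T (s k)) < r k / 2 /\ r (S k) <= r k / 2 /\
     forall x', hnorm x' <= INR k -> 2 * r (S k) <= hdist (T x') (T (s (S k)))) ->
  False.
Proof.
  intros CI Hr Hstep.
  assert (Hnest : forall k p, hdist (T (s (k + p)%nat)) (T (s k)) <= r k - r (k + p)%nat).
  { intros k p. induction p as [|p IH]; [rewrite Nat.add_0_r, hdist_refl; lra|].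
    replace (k + S p)%nat with (S (k + p)) by lia.
    destruct (Hstep (k + p)%nat) as [A1 [A2 _]].
    pose proof (hdist_triangle (T (s (S (k + p)))) (T (s (k + p)%nat)) (T (s k))). lra. }
  destruct (geometric_converges (fun k => T (s k)) 1 (/2) ltac:(lra) ltac:(lra)) as [y Hy].
  { intro k. destruct (Hstep k) as [A _]. destruct (Hr k). lra. }
  destruct (CI s y Hy) as [xs Hxs].
  destruct (INR_unbounded (hnorm xs)) as [k Hk].
  assert (B : hdist y (T (s (S k))) <= r (S k)).
  { apply (converges_ball _ y _ _ (S k) Hy). intros m Hm.
    replace m with (S k + (m - S k))%nat by lia.
    pose proof (Hnest (S k) (m - S k)%nat). destruct (Hr (S k + (m - S k))%nat). lra. }
  destruct (Hstep k) as [_ [_ H3]]. specialize (H3 xs ltac:(lra)). rewrite Hxs in H3.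
  destruct (Hr (S k)). lra.
Qed.

(* Baire: range T, being closed, is not covered by the nowhere dense sets T(B_n). *)
Lemma range_not_meagre : closed_range T ->
  ~ (forall n x0 eps, 0 < eps -> exists x r, hdist (T x) (T x0) < eps /\ 0 < r /\
       forall x', hnorm x' <= INR n -> r <= hdist (T x') (T x)).
Proof.
  intros CI Hnd.
  assert (F : forall n x0 eps, {p : X * R | 0 < eps ->
     hdist (T (fst p)) (T x0) < eps /\ 0 < snd p /\
     forall x', hnorm x' <= INR n -> snd p <= hdist (T x') (T (fst p))}).
  { intros n x0 eps. apply constructive_indefinite_description.
    destruct (Rlt_dec 0 eps) as [He|He].
    - destruct (Hnd n x0 eps He) as (x & r & Hxr). exists (x, r). auto.
    - exists (hzero, 0). intro; lra. }
  pose (seq := nat_rect (fun _ => (X * R)%type) (hzero, 1)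
         (fun k p => let q := proj1_sig (F k (fst p) (snd p / 2)) in
                     (fst q, Rmin (snd p / 2) (snd q / 2)))).
  assert (Sseq : forall k, seq (S k) =
    (fst (proj1_sig (F k (fst (seq k)) (snd (seq k) / 2))),
     Rmin (snd (seq k) / 2) (snd (proj1_sig (F k (fst (seq k)) (snd (seq k) / 2))) / 2)))
    by reflexivity.
  assert (S0 : seq 0%nat = (hzero, 1)) by reflexivity.
  clearbody seq.
  assert (Hr : forall k, 0 < snd (seq k) /\ snd (seq k) <= (/2) ^ k).
  { induction k as [|k [IH1 IH2]].
    - rewrite S0. simpl. lra.
    - rewrite Sseq. cbn [fst snd].
      destruct (proj2_sig (F k (fst (seq k)) (snd (seq k) / 2)) ltac:(lra)) as [_ [Hd _]].
      split; [apply Rmin_glb_lt; lra|].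
      eapply Rle_trans; [apply Rmin_l|]. simpl. lra. }
  apply (nested_image_balls_absurd (fun k => fst (seq k)) (fun k => snd (seq k)) CI Hr).
  intro k. rewrite Sseq. cbn [fst snd].
  destruct (proj2_sig (F k (fst (seq k)) (snd (seq k) / 2)) ltac:(destruct (Hr k); lra))
    as [H1 [_ H3]].
  split; [exact H1|]. split; [apply Rmin_l|]. intros x' Hx'. specialize (H3 x' Hx').
  pose proof (Rmin_r (snd (seq k) / 2)
                     (snd (proj1_sig (F k (fst (seq k)) (snd (seq k) / 2))) / 2)). lra.
Qed.

Lemma image_ball_somewhere_dense : closed_range T ->
  exists n x0 eps, 0 < eps /\ forall x, hdist (T x) (T x0) < eps ->
     forall delta, 0 < delta -> exists x', hnorm x' <= INR n /\ hdist (T x') (T x) < delta.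
Proof.
  intros CI. apply NNPP. intro NB. apply (range_not_meagre CI).
  intros n x0 eps He. apply NNPP. intro C. apply NB. exists n, x0, eps. split; [exact He|].
  intros x Hx delta Hd. apply NNPP. intro C2. apply C. exists x, delta.
  do 2 (split; [assumption|]).
  intros x' Hx'. apply Rnot_lt_le. intro Hlt. apply C2. exists x'. auto.
Qed.

Hypothesis T_bounded : bounded_op T.
Hypothesis T_closed : closed_range T.
Let T_linear := proj1 T_bounded.

(* Translating and rescaling the dense ball around T x0 to one around 0. *)
Lemma image_approx_bounded_preimage : exists K, 0 <= K /\ forall x delta, 0 < delta ->
  exists x', hnorm x' <= K * hnorm (T x) /\ hdist (T x') (T x) < delta.
Proof.
  destruct (image_ball_somewhere_dense T_closed) as [n [x0 [eps [He Hb]]]].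
  exists (4 * INR n / eps). split.
  { apply Rmult_le_pos; [pose proof (pos_INR n); lra | left; apply Rinv_0_lt_compat; lra]. }
  intros x delta Hd.
  destruct (Req_dec (hnorm (T x)) 0) as [Z|Z].
  { exists hzero. rewrite (linear_op_0 T T_linear), (hnorm_eq0 _ Z), hdist_refl, !hnorm_0.
    split; [rewrite Rmult_0_r; lra | lra]. }
  set (c := hnorm (T x)). assert (Hc : 0 < c) by (pose proof (hnorm_ge0 (T x)); unfold c; lra).
  set (s := eps / (2 * c)). assert (Hs : 0 < s) by (unfold s; apply Rdiv_lt_0_compat; lra).
  set (y := hscal (RtoC s) x).
  assert (Ty : T y = hscal (RtoC s) (T x)) by apply T_linear.
  assert (TyD : T y = hadd (T (hadd x0 y)) (hopp (T x0)))
    by (rewrite (proj1 T_linear); symmetry; apply hadd_sub_cancel_l).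
  assert (E1 : hdist (T (hadd x0 y)) (T x0) < eps).
  { unfold hdist. rewrite <- TyD, Ty, hnorm_scal, Rabs_right by lra. fold c.
    unfold s. replace (eps / (2 * c) * c) with (eps / 2) by (field; lra). lra. }
  destruct (Hb _ E1 (delta * s / 2)) as [x1 [N1 D1]]; [apply Rmult_lt_0_compat; nra|].
  destruct (Hb x0 ltac:(rewrite hdist_refl; lra) (delta * s / 2)) as [x2 [N2 D2]];
    [apply Rmult_lt_0_compat; nra|].
  assert (Hs' : 0 < / s) by (apply Rinv_0_lt_compat; lra).
  exists (hscal (RtoC (/ s)) (hadd x1 (hopp x2))). split.
  - rewrite hnorm_scal, Rabs_right by lra. pose proof (hnorm_sub_le x1 x2).
    apply Rle_trans with (/ s * (2 * INR n)); [apply Rmult_le_compat_l; lra|].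
    fold c. unfold s. right. field. split; lra.
  - rewrite (proj2 T_linear), <- (hscal_inv s (T x)) by lra.
    rewrite hdist_scal, Rabs_right, linear_op_sub, <- Ty, TyD by (auto; lra).
    pose proof (hdist_hsub_le (T x1) (T x2) (T (hadd x0 y)) (T x0)).
    apply Rlt_le_trans with (/ s * (delta * s / 2 + delta * s / 2));
      [apply Rmult_lt_compat_l; lra | right; field; lra].
Qed.

(* Subtracting the limit of z, which lies in ker T, from z_0. *)
Lemma kernel_correction_bound (z : nat -> X) D : 0 <= D ->
  (forall k, hdist (z (S k)) (z k) <= D * (/2) ^ k) -> converges (fun k => T (z k)) hzero ->
  exists x', T x' = T (z 0%nat) /\ hnorm x' <= 2 * D.
Proof.
  intros HD Hz Tz.
  destruct (geometric_converges z D (/2) HD ltac:(lra) Hz) as [zs Hzs].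
  assert (T0 : T zs = hzero).
  { apply (converges_unique (fun k => T (z k))); [|exact Tz].
    apply bounded_op_continuous; assumption. }
  exists (hadd (z 0%nat) (hopp zs)). split.
  - rewrite linear_op_sub, T0, hopp_0, hadd_0_r by exact T_linear. reflexivity.
  - change (hdist (z 0%nat) zs <= 2 * D). rewrite hdist_sym.
    apply (converges_ball z zs _ _ 0 Hzs). intros m _.
    pose proof (hdist_geometric_partial z D (/2) ltac:(lra) Hz 0 m) as Hp.
    simpl in Hp. rewrite Rmult_1_r in Hp. eapply Rle_trans; [apply Hp|].
    assert (0 <= (/2) ^ m) by (apply pow_le; lra).
    replace (2 * D) with (D * 1 / (1 - /2)) by field. unfold Rdiv.
    apply Rmult_le_compat_r; [lra | nra].
Qed.

(* Iterating the approximation: z_(k+1) = z_k - x'_k with |T z_k| <= |T x| / 2^k. *)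
Theorem open_mapping : exists C, 0 <= C /\
  forall x, exists x', T x' = T x /\ hnorm x' <= C * hnorm (T x).
Proof.
  destruct image_approx_bounded_preimage as [K [HK HA]].
  exists (2 * K). split; [lra|]. intro x.
  destruct (Req_dec (hnorm (T x)) 0) as [Z|Z].
  { exists hzero. rewrite (linear_op_0 T T_linear), (hnorm_eq0 _ Z), !hnorm_0.
    split; [reflexivity | rewrite Rmult_0_r; lra]. }
  set (c := hnorm (T x)). assert (Hc : 0 < c) by (pose proof (hnorm_ge0 (T x)); unfold c; lra).
  assert (F : forall z k, {x' : X | hnorm x' <= K * hnorm (T z) /\
                                    hdist (T x') (T z) < c * (/2) ^ (S k)}).
  { intros z k. apply constructive_indefinite_description. apply HA.
    apply Rmult_lt_0_compat; [exact Hc | apply pow_lt; lra]. }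
  pose (z := nat_rect (fun _ => X) x (fun k zk => hadd zk (hopp (proj1_sig (F zk k))))).
  assert (Sz : forall k, z (S k) = hadd (z k) (hopp (proj1_sig (F (z k) k)))) by reflexivity.
  assert (Z0 : z 0%nat = x) by reflexivity. clearbody z.
  assert (Tz : forall k, hnorm (T (z k)) <= c * (/2) ^ k).
  { intros [|k]; [rewrite Z0; simpl; unfold c; lra|].
    rewrite Sz, linear_op_sub, <- hnorm_opp, hopp_hadd, hopp_involutive, hadd_comm
      by exact T_linear.
    left. apply (proj2 (proj2_sig (F (z k) k))). }
  rewrite <- Z0. replace (2 * K * c) with (2 * (K * c)) by ring.
  apply kernel_correction_bound; [nra| |].
  - intro k. unfold hdist. rewrite Sz, (hadd_comm (z k)), hadd_sub_cancel_r, hnorm_opp.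
    eapply Rle_trans; [apply (proj1 (proj2_sig (F (z k) k)))|].
    rewrite Rmult_assoc. apply Rmult_le_compat_l; auto.
  - apply (converges_geometric_0 _ c (/2)); [lra | exact Tz].
Qed.

End OpenMapping.

Section Coercive.
Context {V : Hilbert}.
Variables (M : V -> V) (c : R).
Hypothesis M_bounded : bounded_op M.
Hypothesis c_pos : 0 < c.
Hypothesis M_coercive : forall v, c * hnorm2 v <= re (hinner (M v) v).

(* With |M| <= K' and t = c / K'^2 one gets |x - t M x|^2 <= (1 - c^2 / K'^2) |x|^2. *)
Lemma coercive_shift_contraction : exists t q, 0 < t /\ 0 <= q < 1 /\
  forall x, hnorm (hadd x (hscal (RtoC (- t)) (M x))) <= q * hnorm x.
Proof.
  destruct (bounded_op_pos M M_bounded) as [K [HK HKb]].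
  set (K' := K + c). set (t := c / (K' * K')). set (q2 := 1 - c * c / (K' * K')).
  assert (Ht : 0 < t) by (unfold t, K'; apply Rdiv_lt_0_compat; nra).
  assert (Hq2 : 0 <= q2 < 1).
  { unfold q2. assert (0 < c * c / (K' * K')) by (unfold K'; apply Rdiv_lt_0_compat; nra).
    assert (c * c / (K' * K') <= 1); [|lra].
    apply Rmult_le_reg_r with (K' * K'); [unfold K'; nra|].
    unfold Rdiv. rewrite Rmult_assoc, Rinv_l by (unfold K'; nra). unfold K'; nra. }
  exists t, (sqrt q2). split; [exact Ht|]. split.
  { split; [apply sqrt_pos|]. rewrite <- sqrt_1. apply sqrt_lt_1; lra. }
  intro x. apply hnorm_le_sqr; [apply Rmult_le_pos; [apply sqrt_pos | apply hnorm_ge0]|].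
  rewrite hnorm2_add, hnorm2_scal, re_hinner_scal_r, re_hinner_sym.
  replace (sqrt q2 * hnorm x * (sqrt q2 * hnorm x)) with (q2 * hnorm2 x)
    by (rewrite <- hnorm_sqr, <- (sqrt_sqrt q2) at 1 by lra; ring).
  specialize (M_coercive x).
  assert (hnorm2 (M x) <= K' * K' * hnorm2 x).
  { rewrite <- !hnorm_sqr. pose proof (HKb x). pose proof (hnorm_ge0 (M x)).
    pose proof (hnorm_ge0 x). assert (hnorm (M x) <= K' * hnorm x) by (unfold K'; nra). nra. }
  pose proof (hnorm2_ge0 x).
  assert (t * t * hnorm2 (M x) <= t * t * (K' * K' * hnorm2 x)) by (apply Rmult_le_compat_l; nra).
  assert (t * t * (K' * K' * hnorm2 x) = t * c * hnorm2 x) by (unfold t, K'; field; nra).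
  assert (c * c / (K' * K') * hnorm2 x = t * c * hnorm2 x) by (unfold t, K'; field; nra).
  assert (t * (c * hnorm2 x) <= t * re (hinner (M x) x)) by (apply Rmult_le_compat_l; lra).
  unfold q2. nra.
Qed.

(* M v = w is the fixed point equation of the contraction x |-> x - t M x + t w. *)
Lemma coercive_surjective w : exists v, M v = w.
Proof.
  destruct coercive_shift_contraction as [t [q [Ht [Hq Hcontr]]]].
  pose (Phi := fun x => hadd (hadd x (hscal (RtoC (- t)) (M x))) (hscal (RtoC t) w)).
  destruct (contraction_fixpoint Phi q Hq) as [l Fix].
  { intros x y. unfold Phi, hdist. rewrite hsub_hadd, hadd_opp_r, hadd_0_r, hsub_hadd.
    rewrite <- hscal_hsub, <- (linear_op_sub M) by apply M_bounded. apply Hcontr. }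
  exists l. unfold Phi in Fix. rewrite <- hadd_assoc in Fix.
  assert (Fix' : hadd l (hadd (hscal (RtoC (- t)) (M l)) (hscal (RtoC t) w)) = hadd l hzero)
    by (rewrite hadd_0_r; exact Fix).
  apply hadd_cancel_l, hopp_unique in Fix'. clear Fix. rename Fix' into Fix.
  rewrite hopp_hscal, hscal_mul in Fix.
  replace (Cmul (RtoC (-1)) (RtoC (- t))) with (RtoC t) in Fix by (apply Cplx_eq; simpl; ring).
  rewrite <- (hscal_inv t w), Fix, hscal_inv by lra. reflexivity.
Qed.

Lemma coercive_injective v1 v2 : M v1 = M v2 -> v1 = v2.
Proof.
  intro E. apply hsub_eq0, hnorm2_eq0.
  pose proof (M_coercive (hadd v1 (hopp v2))) as Hc.
  rewrite linear_op_sub, E, hadd_opp_r, hinner_0_l in Hc by apply M_bounded. simpl in Hc.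
  pose proof (hnorm2_ge0 (hadd v1 (hopp v2))). nra.
Qed.

End Coercive.

Lemma adjoint_bounded_below_on_range {U V : Hilbert} (r : U -> V) (rs : V -> U) :
  bounded_op r -> closed_range r -> is_adjoint r rs ->
  exists C, 0 <= C /\ forall u, hnorm (r u) <= C * hnorm (rs (r u)).
Proof.
  intros Hr CIr Hadj. destruct (open_mapping r Hr CIr) as [C [HC OM]].
  exists C. split; [exact HC|]. intro u. destruct (OM u) as [u' [Eu Nu]].
  (* |r u|^2 = <u', r* r u> <= |u'| |r* r u| <= C |r u| |r* r u| *)
  assert (Hsq : hnorm (r u) * hnorm (r u) <= C * hnorm (r u) * hnorm (rs (r u))).
  { rewrite hnorm_sqr. unfold hnorm2. rewrite <- Eu at 1. rewrite Hadj.
    eapply Rle_trans; [apply Cauchy_Schwarz|].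
    apply Rmult_le_compat_r; [apply hnorm_ge0 | exact Nu]. }
  pose proof (hnorm_ge0 (r u)). pose proof (hnorm_ge0 (rs (r u))).
  destruct (Req_dec (hnorm (r u)) 0) as [E|E]; [rewrite E; nra|].
  apply Rmult_le_reg_r with (hnorm (r u)); nra.
Qed.

Definition laplacian {U V W : Hilbert} (r : U -> V) (rs : V -> U) (a : V -> W) (as_ : W -> V)
  : V -> V := opadd (opcomp as_ a) (opcomp r rs).

Lemma re_hinner_laplacian {U V W : Hilbert} (r : U -> V) (rs : V -> U) (a : V -> W)
  (as_ : W -> V) v : is_adjoint r rs -> is_adjoint a as_ ->
  re (hinner (laplacian r rs a as_ v) v) = hnorm2 (a v) + hnorm2 (rs v).
Proof.
  intros Hr Ha. unfold laplacian, opadd, opcomp, hnorm2.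
  rewrite re_hinner_add_l, re_hinner_sym, <- Ha, Hr. reflexivity.
Qed.

Lemma Rsqr_le_of_le_sum (n A B al : R) : 0 <= n -> 0 <= A -> 0 <= B -> 0 <= al ->
  n <= al * (A + B) -> n * n <= (2 * al * al + 1) * (A * A + B * B).
Proof.
  intros Hn HA HB Hal Hle.
  assert (n * n <= (al * (A + B)) * (al * (A + B))) by (apply Rmult_le_compat; nra).
  assert ((A + B) * (A + B) <= 2 * (A * A + B * B)) by (pose proof (Rle_0_sqr (A - B)); unfold Rsqr in *; lra).
  assert (al * al * ((A + B) * (A + B)) <= al * al * (2 * (A * A + B * B)))
    by (apply Rmult_le_compat_l; nra).
  nra.
Qed.

Section FibreLaplacian.
Context {U V W Y : Hilbert}.
Variables (r : U -> V) (rs : V -> U) (a : V -> W) (as_ : W -> V) (b : W -> Y).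
Hypotheses (r_bounded : bounded_op r) (rs_bounded : bounded_op rs)
  (a_bounded : bounded_op a) (as_bounded : bounded_op as_) (b_bounded : bounded_op b).
Hypotheses (r_adjoint : is_adjoint r rs) (a_adjoint : is_adjoint a as_).
Hypotheses (exact_r_a : exact_at r a) (exact_a_b : exact_at a b).

(* Split v = v1 + k with |v1| <= C1 |a v| (open mapping for a) and k in ker a = range r,
   on which r* is bounded below. *)
Lemma hnorm_le_laplacian_parts : exists al, 0 <= al /\
  forall v, hnorm v <= al * (hnorm (a v) + hnorm (rs v)).
Proof.
  destruct (open_mapping a a_bounded (closed_range_of_exact a b b_bounded exact_a_b))
    as [C1 [HC1 OM1]].
  destruct (adjoint_bounded_below_on_range r rs r_bounded
              (closed_range_of_exact r a a_bounded exact_r_a) r_adjoint) as [C2 [HC2 Hbelow]].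
  destruct (bounded_op_pos rs rs_bounded) as [B [HB HBb]].
  exists (C1 + C2 + C2 * B * C1). split; [assert (0 <= C2 * B * C1) by
    (apply Rmult_le_pos; nra); lra|].
  intro v. destruct (OM1 v) as [v1 [Ev1 Nv1]].
  set (k := hadd v (hopp v1)).
  assert (ak : a k = hzero)
    by (unfold k; rewrite linear_op_sub, Ev1, hadd_opp_r by apply a_bounded; reflexivity).
  destruct (proj1 (exact_r_a k) ak) as [u Hu].
  assert (Nk : hnorm k <= C2 * hnorm (rs k)) by (rewrite <- Hu; apply Hbelow).
  assert (Nrk : hnorm (rs k) <= hnorm (rs v) + B * hnorm v1).
  { unfold k. rewrite linear_op_sub by apply rs_bounded.
    eapply Rle_trans; [apply hnorm_sub_le|]. pose proof (HBb v1). lra. }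
  assert (Ev : v = hadd v1 k) by (unfold k; symmetry; apply hadd_sub_cancel).
  rewrite Ev at 1. eapply Rle_trans; [apply hnorm_triangle|].
  pose proof (hnorm_ge0 (a v)). pose proof (hnorm_ge0 (rs v)). pose proof (hnorm_ge0 v1).
  assert (C2 * hnorm (rs k) <= C2 * (hnorm (rs v) + B * hnorm v1))
    by (apply Rmult_le_compat_l; auto).
  assert (C2 * B * hnorm v1 <= C2 * B * (C1 * hnorm (a v)))
    by (apply Rmult_le_compat_l; nra).
  assert (0 <= C1 * hnorm (rs v)) by (apply Rmult_le_pos; auto).
  assert (0 <= C2 * hnorm (a v)) by (apply Rmult_le_pos; auto).
  assert (0 <= C2 * B * C1 * hnorm (rs v)) by (apply Rmult_le_pos; auto; apply Rmult_le_pos; nra).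
  ring_simplify. lra.
Qed.

Let Lap := laplacian r rs a as_.

Lemma laplacian_coercive : exists c, 0 < c /\ forall v, c * hnorm2 v <= re (hinner (Lap v) v).
Proof.
  destruct hnorm_le_laplacian_parts as [al [Hal Hle]].
  exists (/ (2 * al * al + 1)). split; [apply Rinv_0_lt_compat; nra|].
  intro v. unfold Lap. rewrite re_hinner_laplacian, <- !hnorm_sqr by assumption.
  pose proof (Rsqr_le_of_le_sum _ _ _ _ (hnorm_ge0 v) (hnorm_ge0 (a v)) (hnorm_ge0 (rs v))
                Hal (Hle v)).
  apply Rmult_le_reg_l with (2 * al * al + 1); [nra|].
  rewrite <- Rmult_assoc, Rinv_r, Rmult_1_l by nra. lra.
Qed.

Lemma laplacian_invertible :
  exists Bx : V -> V, (forall v, Bx (Lap v) = v) /\ (forall w, Lap (Bx w) = w).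
Proof.
  destruct laplacian_coercive as [c [Hc Hco]].
  assert (HL : bounded_op Lap)
    by (apply bounded_op_opadd; apply bounded_op_opcomp; assumption).
  assert (F : forall w, {v | Lap v = w}).
  { intro w. apply constructive_indefinite_description.
    exact (coercive_surjective Lap c HL Hc Hco w). }
  exists (fun w => proj1_sig (F w)). split.
  - intro v. apply (coercive_injective Lap c HL Hc Hco). apply (proj2_sig (F (Lap v))).
  - intro w. apply (proj2_sig (F w)).
Qed.

End FibreLaplacian.

Lemma laplacian_kernel {U V W : Hilbert} (r : U -> V) (rs : V -> U) (a : V -> W) (as_ : W -> V) v :
  is_adjoint r rs -> is_adjoint a as_ -> laplacian r rs a as_ v = hzero -> a v = hzero.
Proof.
  intros Hr Ha Hv. apply hnorm2_eq0.
  pose proof (re_hinner_laplacian r rs a as_ v Hr Ha) as E.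
  rewrite Hv, hinner_0_l in E. simpl in E.
  pose proof (hnorm2_ge0 (a v)). pose proof (hnorm2_ge0 (rs v)). lra.
Qed.

Lemma is_adjoint_sym {V W : Hilbert} (f : V -> W) (g : W -> V) : is_adjoint f g -> is_adjoint g f.
Proof.
  intros Hf y x. rewrite hinner_conj, <- Hf, hinner_conj.
  apply Cplx_eq; simpl; ring.
Qed.

Lemma laplacian_selfadjoint {U V W : Hilbert} (r : U -> V) (rs : V -> U) (a : V -> W) (as_ : W -> V) :
  is_adjoint r rs -> is_adjoint a as_ -> selfadjoint (laplacian r rs a as_).
Proof.
  intros Hr Ha x y. unfold laplacian, opadd, opcomp. rewrite hinner_add, hinner_add_r.
  rewrite (is_adjoint_sym a as_ Ha), Ha, Hr, (is_adjoint_sym r rs Hr). reflexivity.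
Qed.

Lemma adjoint_zero_of_norm {U V : Hilbert} (f : U -> V) (fs : V -> U) x :
  is_adjoint f fs -> re (hinner x (fs (f x))) = 0 -> f x = hzero.
Proof. intros Hf E. apply hnorm2_eq0. unfold hnorm2. rewrite Hf. exact E. Qed.

Section LaplacianGeneralizedInverse.
Context {U V W : Hilbert}.
Variables (r : U -> V) (rs : V -> U) (a : V -> W) (as_ : W -> V) (Bp P : V -> V).
Variable ws : W -> U.
Hypotheses (r_adjoint : is_adjoint r rs) (a_adjoint : is_adjoint a as_).
Hypotheses (a_linear : linear_op a) (as_linear : linear_op as_) (Bp_linear : linear_op Bp).
Hypothesis complex_r_a : forall u, a (r u) = hzero.
Hypothesis Bp_left_inverse : forall v, Bp (laplacian r rs a as_ v) = hadd v (hopp (P v)).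
Hypothesis P_kernel : forall v, laplacian r rs a as_ (P v) = hzero.
Hypothesis ws_adjoint : is_adjoint (opcomp a (opcomp Bp r)) ws.

Let w := opcomp a (opcomp Bp r).

(* w r* r = 0 because laplacian (r u) = r r* r u; then, twice by adjointness,
   r ws = 0 and w r* = 0. *)
Lemma laplacian_parametrix_cross_term y : w (rs y) = hzero.
Proof.
  assert (w_rsr : forall u, w (rs (r u)) = hzero).
  { intro u. assert (Lr : laplacian r rs a as_ (r u) = r (rs (r u))).
    { unfold laplacian, opadd, opcomp. rewrite complex_r_a, linear_op_0, hadd_0 by assumption.
      reflexivity. }
    unfold w, opcomp. rewrite <- Lr, Bp_left_inverse, linear_op_sub by assumption.
    rewrite complex_r_a, (laplacian_kernel r rs a as_ (P (r u)) r_adjoint a_adjoint (P_kernel _)).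
    rewrite hopp_0. apply hadd_0. }
  assert (r_ws : forall z, r (ws z) = hzero).
  { intro z. apply (adjoint_zero_of_norm r rs _ r_adjoint).
    rewrite re_hinner_sym, <- ws_adjoint. fold w. rewrite w_rsr, hinner_0_l. reflexivity. }
  apply (adjoint_zero_of_norm w ws _ ws_adjoint).
  rewrite re_hinner_sym, <- r_adjoint, r_ws, hinner_0_l. reflexivity.
Qed.

(* a Bp a* a = a (1 - P) - a Bp r r* = a, using a P = 0 and w r* = 0. *)
Lemma laplacian_generalized_inverse x : a (Bp (as_ (a x))) = a x.
Proof.
  replace (as_ (a x)) with (hadd (laplacian r rs a as_ x) (hopp (r (rs x))))
    by (unfold laplacian, opadd, opcomp; apply hadd_sub_cancel_r).
  rewrite !linear_op_sub, Bp_left_inverse, linear_op_sub by assumption.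
  rewrite (laplacian_kernel r rs a as_ (P x) r_adjoint a_adjoint (P_kernel _)).
  change (a (Bp (r (rs x)))) with (w (rs x)).
  rewrite laplacian_parametrix_cross_term, !hopp_0, !hadd_0_r. reflexivity.
Qed.

End LaplacianGeneralizedInverse.

Lemma opsub_opadd_opscal {V W : Hilbert} (f g : V -> W) :
  opsub f g = opadd f (opscal (RtoC (-1)) g).
Proof.
  apply functional_extensionality. intro x. unfold opsub, opadd, opscal.
  rewrite hopp_hscal. reflexivity.
Qed.

Section OperatorAlgebra.
Variable L : GOA.

Lemma L0_linear g0 g1 (A : H L g0 -> H L g1) : L0 g0 g1 A -> linear_op A.
Proof. intro HA. apply (L0_bounded L g0 g1 A HA). Qed.

Lemma L0_opsub g0 g1 (A B : H L g0 -> H L g1) : L0 g0 g1 A -> L0 g0 g1 B -> L0 g0 g1 (opsub A B).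
Proof. intros. rewrite opsub_opadd_opscal. apply L0_add; [|apply L0_scal]; assumption. Qed.

Lemma L0_laplacian g' g0 g1 (R : H L g' -> H L g0) Rs (T : H L g0 -> H L g1) Ts :
  L0 g' g0 R -> L0 g0 g' Rs -> L0 g0 g1 T -> L0 g1 g0 Ts -> L0 g0 g0 (laplacian R Rs T Ts).
Proof. intros. apply L0_add; apply L0_comp; assumption. Qed.

Variable Cl : Classical L.

Lemma symb_opsub l g0 g1 (A B : H L g0 -> H L g1) : (l < nsym Cl)%nat ->
  L0 g0 g1 A -> L0 g0 g1 B -> symb Cl l (opsub A B) = fun x => opsub (symb Cl l A x) (symb Cl l B x).
Proof.
  intros Hl HA HB. rewrite opsub_opadd_opscal, sym_add, sym_scal by (auto; apply L0_scal; auto).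
  apply functional_extensionality_dep. intro x. rewrite opsub_opadd_opscal. reflexivity.
Qed.

Lemma symb_laplacian l g' g0 g1 (R : H L g' -> H L g0) Rs (T : H L g0 -> H L g1) Ts :
  (l < nsym Cl)%nat -> L0 g' g0 R -> L0 g0 g' Rs -> L0 g0 g1 T -> L0 g1 g0 Ts ->
  symb Cl l (laplacian R Rs T Ts) =
  fun x => laplacian (symb Cl l R x) (symb Cl l Rs x) (symb Cl l T x) (symb Cl l Ts x).
Proof.
  intros. unfold laplacian. rewrite sym_add, !sym_mul by (auto; apply L0_comp; auto).
  reflexivity.
Qed.

Lemma laplacian_has_parametrix g' g0 g1 g2 (R : H L g' -> H L g0) Rs (T : H L g0 -> H L g1) Ts
  (Bn : H L g1 -> H L g2) :
  L0 g' g0 R -> L0 g0 g' Rs -> L0 g0 g1 T -> L0 g1 g0 Ts -> L0 g1 g2 Bn ->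
  is_adjoint R Rs -> is_adjoint T Ts ->
  (forall l, (l < nsym Cl)%nat -> forall x,
     exact_at (symb Cl l R x) (symb Cl l T x) /\ exact_at (symb Cl l T x) (symb Cl l Bn x)) ->
  has_parametrix L g0 g0 (laplacian R Rs T Ts).
Proof.
  intros HR HRs HT HTs HBn adjR adjT Hfib.
  apply (proj1 (sym_elliptic L Cl g0 g0 _ (L0_laplacian _ _ _ R Rs T Ts HR HRs HT HTs))).
  intros l Hl x. rewrite (symb_laplacian l _ _ _ R Rs T Ts) by assumption.
  destruct (Hfib l Hl x) as [Ex1 Ex2].
  apply (laplacian_invertible _ _ _ _ (symb Cl l Bn x)); try (apply sym_morph; assumption);
    try (apply sym_adj; assumption); assumption.
Qed.

Hypothesis HF : ext_fredholm L.

Lemma generalized_inverse_exists g' g0 g1 g2 (R : H L g' -> H L g0) (T : H L g0 -> H L g1)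
  (Bn : H L g1 -> H L g2) :
  L0 g' g0 R -> L0 g0 g1 T -> L0 g1 g2 Bn -> (forall u, T (R u) = hzero) ->
  (forall l, (l < nsym Cl)%nat -> forall x,
     exact_at (symb Cl l R x) (symb Cl l T x) /\ exact_at (symb Cl l T x) (symb Cl l Bn x)) ->
  exists C, L0 g1 g0 C /\ forall x, T (C (T x)) = T x.
Proof.
  intros HR HT HBn TR Hfib.
  destruct (L0_adj L _ _ T HT) as [Ts [adjT HTs]].
  destruct (L0_adj L _ _ R HR) as [Rs [adjR HRs]].
  set (D := laplacian R Rs T Ts).
  assert (HD : L0 g0 g0 D) by (apply L0_laplacian; assumption).
  assert (FD : fredholm D).
  { apply (proj1 (proj1 HF g0 g0 D HD)).
    apply (laplacian_has_parametrix _ _ _ g2 R Rs T Ts Bn); assumption. }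
  destruct (proj2 HF g0 D HD (laplacian_selfadjoint R Rs T Ts adjR adjT) FD)
    as [B [P [HB [HP [_ BD]]]]].
  destruct (L0_adj L _ _ (opcomp T (opcomp B R))) as [Ws [adjW _]].
  { apply L0_comp; [apply L0_comp|]; assumption. }
  exists (opcomp B Ts). split; [apply L0_comp; assumption|].
  intro x. apply (laplacian_generalized_inverse R Rs T Ts B P Ws); try assumption;
    try (apply L0_linear; assumption).
  - intro v. exact (f_equal (fun f => f v) BD).
  - intro v. apply (proj1 (HP v)).
Qed.

End OperatorAlgebra.

Lemma exact_at_complex {U V W : Hilbert} (f : U -> V) (g : V -> W) u :
  exact_at f g -> g (f u) = hzero.
Proof. intro Hex. apply Hex. exists u. reflexivity. Qed.

Lemma exact_seq_exact_at (V : nat -> Hilbert) f N j : exact_seq V f N -> (j < N)%nat ->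
  exact_at (f j) (f (S j)).
Proof. intros [_ [Hmid _]] Hj. exact (Hmid j Hj). Qed.

Lemma exact_seq_exact_at_0 {U : Hilbert} (V : nat -> Hilbert) f N : linear_op (f 0%nat) ->
  exact_seq V f N -> exact_at (@opzero U (V 0%nat)) (f 0%nat).
Proof.
  intros Hlin [Hinj _] v. unfold opzero. split.
  - intro Hv. exists hzero. apply Hinj. rewrite Hv, linear_op_0 by exact Hlin. reflexivity.
  - intros [u <-]. apply linear_op_0, Hlin.
Qed.

Definition generalized_inverse (L : GOA) (g0 g1 : G L) (T : H L g0 -> H L g1) : H L g1 -> H L g0 :=
  epsilon (inhabits opzero) (fun C => L0 g1 g0 C /\ forall x, T (C (T x)) = T x).

Lemma generalized_inverse_spec (L : GOA) (g0 g1 : G L) (T : H L g0 -> H L g1) :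
  (exists C, L0 g1 g0 C /\ forall x, T (C (T x)) = T x) ->
  L0 g1 g0 (generalized_inverse L g0 g1 T) /\
  forall x, T (generalized_inverse L g0 g1 T (T x)) = T x.
Proof. exact (epsilon_spec (inhabits opzero) (fun C => L0 g1 g0 C /\ forall x, T (C (T x)) = T x)). Qed.

Definition correct {U V W : Hilbert} (Bn : V -> W) (T : U -> V) (C : V -> U) : V -> W :=
  opsub Bn (opcomp Bn (opcomp T C)).

Lemma correct_complex {U V W : Hilbert} (Bn : V -> W) (T : U -> V) (C : V -> U) :
  (forall x, T (C (T x)) = T x) -> forall x, correct Bn T C (T x) = hzero.
Proof. intros TCT x. unfold correct, opsub, opcomp. rewrite TCT. apply hadd_opp_r. Qed.

Section CorrectOperators.
Variables (L : GOA) (Cl : Classical L) (g0 g1 g2 : G L).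
Variables (T : H L g0 -> H L g1) (C : H L g1 -> H L g0) (Bn : H L g1 -> H L g2).
Hypotheses (HT : L0 g0 g1 T) (HC : L0 g1 g0 C) (HBn : L0 g1 g2 Bn).

Lemma L0_correct : L0 g1 g2 (correct Bn T C).
Proof. apply L0_opsub; [|apply L0_comp; [apply L0_comp|]]; assumption. Qed.

Lemma symb_correct l : (l < nsym Cl)%nat ->
  (forall x v, symb Cl l Bn x (symb Cl l T x v) = hzero) ->
  symb Cl l (correct Bn T C) = symb Cl l Bn.
Proof.
  intros Hl Hcomp.
  assert (HTC : L0 g1 g1 (opcomp T C)) by (apply L0_comp; assumption).
  unfold correct. rewrite symb_opsub by (assumption || (apply L0_comp; assumption)).
  rewrite (sym_mul L Cl l _ _ _ _ _ Hl HTC HBn), (sym_mul L Cl l _ _ _ _ _ Hl HC HT).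
  apply functional_extensionality_dep. intro x. apply functional_extensionality. intro v.
  unfold opsub, opcomp. rewrite Hcomp, hopp_0, hadd_0_r. reflexivity.
Qed.

Lemma correct_sub_smoothing : Linf g0 g2 (opcomp Bn T) ->
  Linf g1 g2 (opsub (correct Bn T C) Bn).
Proof.
  intro Hsm. replace (opsub (correct Bn T C) Bn) with (opscal (RtoC (-1)) (opcomp (opcomp Bn T) C)).
  - apply Linf_scal, Linf_comp_r; assumption.
  - apply functional_extensionality. intro v. unfold correct, opsub, opscal, opcomp.
    rewrite <- hopp_hscal. symmetry. apply hadd_sub_cancel_l.
Qed.

End CorrectOperators.

Section Correction.
Variables (L : GOA) (Cl : Classical L) (HF : ext_fredholm L) (N : nat) (g : nat -> G L).
Variable A : forall j : nat, H L (g j) -> H L (g (S j)).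
Hypothesis HA : forall j, (j <= N)%nat -> L0 (g j) (g (S j)) (A j).
Hypothesis Hex : forall l, (l < nsym Cl)%nat -> forall x : Xbase Cl l,
  exact_seq (fun j => Ebun Cl l (g j) x) (fun j => symb Cl l (A j) x) N.

Fixpoint corrected (j : nat) : H L (g j) -> H L (g (S j)) :=
  match j with
  | O => A O
  | S i => correct (A (S i)) (corrected i) (generalized_inverse L (g i) (g (S i)) (corrected i))
  end.

Lemma corrected_S j : corrected (S j) =
  correct (A (S j)) (corrected j) (generalized_inverse L (g j) (g (S j)) (corrected j)).
Proof. reflexivity. Qed.

Definition same_symbol_as_A (j : nat) : Prop :=
  L0 (g j) (g (S j)) (corrected j) /\
  forall l, (l < nsym Cl)%nat -> symb Cl l (corrected j) = symb Cl l (A j).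

Definition has_generalized_inverse (j : nat) : Prop :=
  let C := generalized_inverse L (g j) (g (S j)) (corrected j) in
  L0 (g (S j)) (g j) C /\ forall x, corrected j (C (corrected j x)) = corrected j x.

Lemma symb_A_exact l j x : (l < nsym Cl)%nat -> (j < N)%nat ->
  exact_at (symb Cl l (A j) x) (symb Cl l (A (S j)) x).
Proof. intros Hl Hj. exact (exact_seq_exact_at _ _ N j (Hex l Hl x) Hj). Qed.

Lemma corrected_step j : (S j <= N)%nat -> same_symbol_as_A j -> has_generalized_inverse j ->
  same_symbol_as_A (S j) /\ forall x, corrected (S j) (corrected j x) = hzero.
Proof.
  intros Hj [HT ST] [HC TCT]. rewrite corrected_S. split; [split|].
  - apply L0_correct; auto.
  - intros l Hl. apply (symb_correct L Cl _ _ _ (corrected j)); auto.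
    intros x v. rewrite (ST l Hl).
    apply exact_at_complex, symb_A_exact; [assumption | lia].
  - apply correct_complex, TCT.
Qed.

Lemma has_generalized_inverse_0 : (0 < N)%nat -> has_generalized_inverse 0.
Proof.
  intro HN. apply generalized_inverse_spec.
  apply (generalized_inverse_exists L Cl HF (g 0%nat) _ _ (g 2%nat) opzero (A 0%nat) (A 1%nat));
    try (apply HA; lia); try apply L0_zero.
  - intro u. apply linear_op_0, L0_linear with (L := L), HA. lia.
  - intros l Hl x. rewrite (sym_smooth L Cl l _ _ opzero Hl (Linf_zero L _ _)). split.
    + apply (exact_seq_exact_at_0 (fun j => Ebun Cl l (g j) x) (fun j => symb Cl l (A j) x) N).
      * apply sym_morph, HA; [assumption | lia].
      * apply Hex, Hl.
    + apply symb_A_exact; assumption.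
Qed.

Lemma has_generalized_inverse_S j : (S j < N)%nat -> same_symbol_as_A j ->
  same_symbol_as_A (S j) -> (forall x, corrected (S j) (corrected j x) = hzero) ->
  has_generalized_inverse (S j).
Proof.
  intros Hj [HR SR] [HT ST] TR. apply generalized_inverse_spec.
  apply (generalized_inverse_exists L Cl HF (g j) _ _ (g (S (S (S j)))) (corrected j)
           (corrected (S j)) (A (S (S j)))); auto.
  intros l Hl x. rewrite (SR l Hl), (ST l Hl).
  split; apply symb_A_exact; auto; lia.
Qed.

Lemma corrected_spec j : (j <= N)%nat ->
  same_symbol_as_A j /\ ((j < N)%nat -> has_generalized_inverse j).
Proof.
  induction j as [|j IH]; intro Hj.
  - split; [split; [apply HA; lia | reflexivity] | apply has_generalized_inverse_0].
  - destruct (IH ltac:(lia)) as [Sj Gj].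
    destruct (corrected_step j Hj Sj (Gj ltac:(lia))) as [SSj Cj].
    split; [exact SSj|]. intro HjN. apply has_generalized_inverse_S; assumption.
Qed.

Lemma corrected_complex j : (j < N)%nat -> forall x, corrected (S j) (corrected j x) = hzero.
Proof.
  intro Hj. destruct (corrected_spec j ltac:(lia)) as [Sj Gj].
  exact (proj2 (corrected_step j Hj Sj (Gj Hj))).
Qed.

Lemma corrected_smoothing :
  (forall j, (j < N)%nat -> Linf (g j) (g (S (S j))) (opcomp (A (S j)) (A j))) ->
  forall j, (j <= N)%nat -> Linf (g j) (g (S j)) (opsub (corrected j) (A j)).
Proof.
  intros Hsm j. induction j as [|j IH]; intro Hj.
  - change (Linf (g 0%nat) (g 1%nat) (opsub (A 0%nat) (A 0%nat))).
    replace (opsub (A 0%nat) (A 0%nat)) with (@opzero (H L (g 0%nat)) (H L (g 1%nat)))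
      by (apply functional_extensionality; intro v; symmetry; apply hadd_opp_r).
    apply Linf_zero.
  - destruct (corrected_spec j ltac:(lia)) as [[HT _] Gj].
    destruct (Gj ltac:(lia)) as [HC _].
    rewrite corrected_S. apply (correct_sub_smoothing L _ _ _ (corrected j) _ _ HC).
    replace (opcomp (A (S j)) (corrected j))
      with (opadd (opcomp (A (S j)) (A j)) (opcomp (A (S j)) (opsub (corrected j) (A j)))).
    + apply Linf_add; [apply Hsm; lia | apply Linf_comp_l; [apply IH; lia | apply HA; lia]].
    + apply functional_extensionality. intro v. unfold opadd, opcomp, opsub.
      rewrite <- (proj1 (L0_linear L _ _ (A (S j)) (HA (S j) Hj))).
      f_equal. apply hadd_sub_cancel.
Qed.

End Correction.

Theorem mainTheorem12 (L : GOA) (Cl : Classical L) (HF : ext_fredholm L)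
  (N : nat) (g : nat -> G L) (A : forall j : nat, H L (g j) -> H L (g (S j)))
  (HA : forall j, (j <= N)%nat -> L0 (g j) (g (S j)) (A j))
  (Hex : forall l, (l < nsym Cl)%nat -> forall x : Xbase Cl l,
      exact_seq (fun j => Ebun Cl l (g j) x) (fun j => symb Cl l (A j) x) N) :
  (exists At : forall j : nat, H L (g j) -> H L (g (S j)),
      (forall j, (j <= N)%nat -> L0 (g j) (g (S j)) (At j) /\
          forall l, (l < nsym Cl)%nat -> symb Cl l (At j) = symb Cl l (A j)) /\
      (forall j, (j < N)%nat -> opcomp (At (S j)) (At j) = opzero)) /\
  ((forall j, (j < N)%nat -> Linf (g j) (g (S (S j))) (opcomp (A (S j)) (A j))) ->
   exists At : forall j : nat, H L (g j) -> H L (g (S j)),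
      (forall j, (j <= N)%nat -> L0 (g j) (g (S j)) (At j) /\
          forall l, (l < nsym Cl)%nat -> symb Cl l (At j) = symb Cl l (A j)) /\
      (forall j, (j < N)%nat -> opcomp (At (S j)) (At j) = opzero) /\
      (forall j, (j <= N)%nat -> Linf (g j) (g (S j)) (opsub (At j) (A j)))).
Proof.
  assert (Symb : forall j, (j <= N)%nat -> L0 (g j) (g (S j)) (corrected L g A j) /\
            forall l, (l < nsym Cl)%nat -> symb Cl l (corrected L g A j) = symb Cl l (A j))
    by (intros j Hj; apply (corrected_spec L Cl HF N g A HA Hex j Hj)).
  assert (Complex : forall j, (j < N)%nat ->
            opcomp (corrected L g A (S j)) (corrected L g A j) = opzero).
  { intros j Hj. apply functional_extensionality.
    exact (corrected_complex L Cl HF N g A HA Hex j Hj). }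
  split.
  - exists (corrected L g A). split; assumption.
  - intro Hsm. exists (corrected L g A). split; [|split]; try assumption.
    apply (corrected_smoothing L Cl HF N g A HA Hex Hsm).
Qed.
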